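(* Let $a\ge 0$ be an integer and $\mathbf{t}=2^a(1+\mathbf{i})$. Then in $H_{1,2,2}$ the left ideal $H_{1,2,2}\,\mathbf{t}$, the right ideal $\mathbf{t}\,H_{1,2,2}$, and the two-sided ideal generated by $\mathbf{t}$ are all the same set.
   Context: Let $\mathbf{i},\mathbf{j},\mathbf{k}$ be the standard quaternion units. $H_{1,2,2}$ is the subring of the quaternions equal to the $\mathbb{Z}$-module generated by $\mathbf{v}_1=1$, $\mathbf{v}_2=\mathbf{i}$, $\mathbf{v}_3=\tfrac12(1+\mathbf{i}+\sqrt2\,\mathbf{j})$, $\mathbf{v}_4=\tfrac12(1+\mathbf{i}+\sqrt2\,\mathbf{k})$. *)

From HB Require Import structures.
From mathcomp Require Import all_boot all_order all_algebra.
Set Implicit Arguments. Unset Strict Implicit. Unset Printing Implicit Defensive.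
Import Order.TTheory GRing.Theory Num.Theory.
Local Open Scope ring_scope.

Record quat (R : rcfType) := Quat { q0 : R; q1 : R; q2 : R; q3 : R }.

Section Quat.
Variable R : rcfType.

Definition qzero : quat R := Quat 0 0 0 0.
Definition qadd (x y : quat R) : quat R :=
  Quat (q0 x + q0 y) (q1 x + q1 y) (q2 x + q2 y) (q3 x + q3 y).
Definition qscale (k : R) (x : quat R) : quat R :=
  Quat (k * q0 x) (k * q1 x) (k * q2 x) (k * q3 x).
(* Hamilton product: i^2 = j^2 = k^2 = ijk = -1 *)
Definition qmul (x y : quat R) : quat R :=
  Quat (q0 x * q0 y - q1 x * q1 y - q2 x * q2 y - q3 x * q3 y)
       (q0 x * q1 y + q1 x * q0 y + q2 x * q3 y - q3 x * q2 y)
       (q0 x * q2 y - q1 x * q3 y + q2 x * q0 y + q3 x * q1 y)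
       (q0 x * q3 y + q1 x * q2 y - q2 x * q1 y + q3 x * q0 y).

Definition v1 : quat R := Quat 1 0 0 0.
Definition v2 : quat R := Quat 0 1 0 0.
Definition v3 : quat R := Quat (2^-1) (2^-1) (Num.sqrt 2 / 2) 0.
Definition v4 : quat R := Quat (2^-1) (2^-1) 0 (Num.sqrt 2 / 2).

Definition inH122 (x : quat R) : Prop :=
  exists a b c d : int,
    x = qadd (qadd (qscale a%:~R v1) (qscale b%:~R v2))
             (qadd (qscale c%:~R v3) (qscale d%:~R v4)).

Definition left_ideal (t x : quat R) : Prop :=
  exists h, inH122 h /\ x = qmul h t.
Definition right_ideal (t x : quat R) : Prop :=
  exists h, inH122 h /\ x = qmul t h.
Definition twosided_ideal (t x : quat R) : Prop :=
  exists s : seq (quat R * quat R),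
    (forall i, (i < size s)%N ->
       inH122 (nth (qzero, qzero) s i).1 /\ inH122 (nth (qzero, qzero) s i).2) /\
    x = foldr (fun p acc => qadd (qmul (qmul p.1 t) p.2) acc) qzero s.
End Quat.

(* Conjugation by 1 + i preserves H_{1,2,2}: in coordinates for the Z-basis
   (v1, v2, v3, v4), x (1 + i) = (1 + i) x' with x' = (a + c, b + c, d, -c),
   and (1 + i) x = x'' (1 + i) with x'' = (a + d, b + d, -d, c).  Hence
   H t = t H for every real multiple t of 1 + i, and each generator x t y of
   the two-sided ideal equals t (x' y) with x' y in H. *)
From HB Require Import structures.
From mathcomp Require Import all_boot all_order all_algebra.
From mathcomp Require Import ring.
Import Order.TTheory GRing.Theory Num.Theory.
Local Open Scope ring_scope.

Section QuaternionAlgebra.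
Variable R : rcfType.
Implicit Types x y z : quat R.

Lemma qmulA x y z : qmul (qmul x y) z = qmul x (qmul y z).
Proof.
by case: x => ????; case: y => ????; case: z => ????; congr Quat => /=; ring.
Qed.

Lemma qmulDr x y z : qmul x (qadd y z) = qadd (qmul x y) (qmul x z).
Proof.
by case: x => ????; case: y => ????; case: z => ????; congr Quat => /=; ring.
Qed.

Lemma qmul1r x : qmul (v1 R) x = x.
Proof. by case: x => ????; congr Quat => /=; ring. Qed.

Lemma qmulr0 x : qmul x (qzero R) = qzero R.
Proof. by case: x => ????; congr Quat => /=; ring. Qed.

Lemma qaddr0 x : qadd x (qzero R) = x.
Proof. by case: x => ????; congr Quat => /=; ring. Qed.

End QuaternionAlgebra.

Section H122.
Variable R : rcfType.
Let s : R := Num.sqrt 2.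
Implicit Types x y : quat R.

Lemma sqrt2_mul : s * s = 2.
Proof. by rewrite /s -expr2 sqr_sqrtr // ler0n. Qed.

Lemma two_neq0 : (2 : R) != 0.
Proof. by rewrite pnatr_eq0. Qed.

Definition h122 (a b c d : int) : quat R :=
  qadd (qadd (qscale a%:~R (v1 R)) (qscale b%:~R (v2 R)))
       (qadd (qscale c%:~R (v3 R)) (qscale d%:~R (v4 R))).

Lemma inH122E x : inH122 x = exists a b c d, x = h122 a b c d.
Proof. by []. Qed.

Lemma h122_inH122 a b c d : inH122 (h122 a b c d).
Proof. by exists a, b, c, d. Qed.

Lemma h122E a b c d :
  h122 a b c d =
  Quat (a%:~R + (c%:~R + d%:~R) / 2) (b%:~R + (c%:~R + d%:~R) / 2)
       (c%:~R / 2 * s) (d%:~R / 2 * s).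
Proof.
have h2 := two_neq0.
by rewrite /h122 /qadd /qscale; congr Quat => /=; rewrite /s; field.
Qed.

Lemma qmul_sqrt2 (p q X Y p' q' X' Y' : R) :
  qmul (Quat p q (X * s) (Y * s)) (Quat p' q' (X' * s) (Y' * s)) =
  Quat (p * p' - q * q' - 2 * X * X' - 2 * Y * Y')
       (p * q' + q * p' + 2 * X * Y' - 2 * Y * X')
       ((p * X' - q * Y' + X * p' + Y * q') * s)
       ((p * Y' + q * X' - X * q' + Y * p') * s).
Proof. by congr Quat => /=; rewrite -?sqrt2_mul; ring. Qed.

Lemma h122_add a1 b1 c1 d1 a2 b2 c2 d2 :
  qadd (h122 a1 b1 c1 d1) (h122 a2 b2 c2 d2) =
  h122 (a1 + a2) (b1 + b2) (c1 + c2) (d1 + d2).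
Proof.
by have h2 := two_neq0; rewrite !h122E; congr Quat => /=; rewrite !rmorphD /=; field.
Qed.

Lemma h122_mul a1 b1 c1 d1 a2 b2 c2 d2 :
  qmul (h122 a1 b1 c1 d1) (h122 a2 b2 c2 d2) =
  h122 (a1 * a2 - b1 * b2 - b1 * c2 - c1 * c2 - d1 * b2 - d1 * c2 - d1 * d2)
       (a1 * b2 + b1 * a2 + b1 * d2 + c1 * b2 + c1 * d2 - d1 * c2)
       (a1 * c2 - b1 * d2 + c1 * a2 + c1 * c2 + d1 * b2 + d1 * c2)
       (a1 * d2 + b1 * c2 - c1 * b2 + d1 * a2 + d1 * c2 + d1 * d2).
Proof.
have h2 := two_neq0; rewrite !h122E qmul_sqrt2; congr Quat;
  rewrite ?rmorphD ?rmorphB ?rmorphM /=; try by field.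
all: by congr (_ * s); field.
Qed.

Lemma inH122_0 : inH122 (qzero R).
Proof. by rewrite inH122E; exists 0, 0, 0, 0; rewrite h122E; congr Quat => /=; ring. Qed.

Lemma inH122_1 : inH122 (v1 R).
Proof. by rewrite inH122E; exists 1, 0, 0, 0; rewrite h122E; congr Quat => /=; ring. Qed.

Lemma inH122D x y : inH122 x -> inH122 y -> inH122 (qadd x y).
Proof.
rewrite 2!inH122E => -[a1 [b1 [c1 [d1 ->]]]] [a2 [b2 [c2 [d2 ->]]]].
by rewrite h122_add; apply: h122_inH122.
Qed.

Lemma inH122M x y : inH122 x -> inH122 y -> inH122 (qmul x y).
Proof.
rewrite 2!inH122E => -[a1 [b1 [c1 [d1 ->]]]] [a2 [b2 [c2 [d2 ->]]]].
by rewrite h122_mul; apply: h122_inH122.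
Qed.

Variable k : R.
Let t : quat R := Quat k k 0 0.

Let t_sqrt2 : t = Quat k k (0 * s) (0 * s).
Proof. by rewrite mul0r. Qed.

Lemma h122_mul_t a b c d :
  qmul (h122 a b c d) t = qmul t (h122 (a + c) (b + c) d (- c)).
Proof.
have h2 := two_neq0; rewrite t_sqrt2 !h122E !qmul_sqrt2; congr Quat;
  rewrite ?rmorphD ?rmorphN /=; try by field.
all: by congr (_ * s); field.
Qed.

Lemma t_mul_h122 a b c d :
  qmul t (h122 a b c d) = qmul (h122 (a + d) (b + d) (- d) c) t.
Proof.
have h2 := two_neq0; rewrite t_sqrt2 !h122E !qmul_sqrt2; congr Quat;
  rewrite ?rmorphD ?rmorphN /=; try by field.
all: by congr (_ * s); field.
Qed.

End H122.

Section Normaliser.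
Variables (R : rcfType) (t : quat R).
Hypothesis Ht_tH :
  forall {h}, inH122 h -> exists2 h', inH122 h' & qmul h t = qmul t h'.
Hypothesis tH_Ht :
  forall {h}, inH122 h -> exists2 h', inH122 h' & qmul t h = qmul h' t.

Lemma left_ideal_iff_right x : left_ideal t x <-> right_ideal t x.
Proof.
split=> -[h [Hh ->]].
- by have [h' Hh' ->] := Ht_tH Hh; exists h'.
- by have [h' Hh' ->] := tH_Ht Hh; exists h'.
Qed.

Lemma right_ideal_twosided x : right_ideal t x -> twosided_ideal t x.
Proof.
move=> [h [Hh ->]]; exists [:: (v1 R, h)]; split.
  by case=> // _; split=> //; apply: inH122_1.
by rewrite /= qaddr0 qmul1r.
Qed.

Lemma twosided_ideal_right x : twosided_ideal t x -> right_ideal t x.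
Proof.
move=> [l [Hl ->]]; elim: l Hl => [|[p1 p2] l IHl] Hl /=.
  by exists (qzero R); rewrite qmulr0; split=> //; apply: inH122_0.
have [/Ht_tH [p1' Hp1' ->] Hp2] := Hl 0%N isT.
have [h [Hh ->]] := IHl (fun i => Hl i.+1).
exists (qadd (qmul p1' p2) h); rewrite qmulA qmulDr; split=> //.
by apply: inH122D => //; apply: inH122M.
Qed.

End Normaliser.

Lemma H122_mul_t (R : rcfType) (k : R) h : inH122 h ->
  exists2 h', inH122 h' & qmul h (Quat k k 0 0) = qmul (Quat k k 0 0) h'.
Proof.
rewrite inH122E => -[a [b [c [d ->]]]].
by exists (h122 R (a + c) (b + c) d (- c)); [apply: h122_inH122 | apply: h122_mul_t].
Qed.

Lemma t_mul_H122 (R : rcfType) (k : R) h : inH122 h ->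
  exists2 h', inH122 h' & qmul (Quat k k 0 0) h = qmul h' (Quat k k 0 0).
Proof.
rewrite inH122E => -[a [b [c [d ->]]]].
by exists (h122 R (a + d) (b + d) (- d) c); [apply: h122_inH122 | apply: t_mul_h122].
Qed.

Theorem lemma10 (R : rcfType) (a : nat) :
  let t : quat R := Quat (2 ^+ a) (2 ^+ a) 0 0 in
  forall x : quat R,
    (left_ideal t x <-> right_ideal t x) /\
    (right_ideal t x <-> twosided_ideal t x).
Proof.
move=> t x; have Ht := @H122_mul_t R (2 ^+ a); have tH := @t_mul_H122 R (2 ^+ a).
split; first exact: left_ideal_iff_right.
by split; [apply: right_ideal_twosided | apply: twosided_ideal_right].
Qed.
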